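(* On the exterior Kerr spacetime (Boyer–Lindquist coordinates, region $\Delta>0$, $0<\theta<\pi$), let $C\neq0$ be a constant, $f=f(r)$ a smooth function with $f(r)^2<C^2$, and $u_0\neq0$ a constant. Then $$F_M=\frac{u_0}{\Delta}\,dr\wedge\Big[\frac{\rho^2\sqrt{C^2-f^2}}{\sin\theta}\,d\theta+f\,\big(a\,dt-(r^2+a^2)\,d\varphi\big)\Big]$$ is a magnetically dominated force-free electromagnetic field. Its kernel is spanned by $e_0=\frac{1}{\sqrt{\rho^2\Delta}}[(r^2+a^2)\partial_t+a\partial_\varphi]$ and $e_1=\frac{a\sin^2\theta\,\partial_t+L\sin\theta\,\partial_\theta+\partial_\varphi}{\sqrt{\rho^2(1+L^2)}\sin\theta}$, where $L=f/\sqrt{C^2-f^2}$. If moreover $f$ is constant, then $F_M$ is a vacuum solution.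
   Context: The Kerr metric with mass $M$ and spin parameter $a$ in Boyer–Lindquist coordinates $(t,r,\theta,\varphi)$ is $ds^2=g_{tt}dt^2+2g_{t\varphi}dt\,d\varphi+\frac{\rho^2}{\Delta}dr^2+\rho^2d\theta^2+\frac{\Sigma^2\sin^2\theta}{\rho^2}d\varphi^2$, with $g_{tt}=-1+\frac{2Mr}{\rho^2}$, $g_{t\varphi}=-\frac{2Mra\sin^2\theta}{\rho^2}$, $\rho^2=r^2+a^2\cos^2\theta$, $\Delta=r^2-2Mr+a^2$, $\Sigma^2=(r^2+a^2)^2-\Delta a^2\sin^2\theta$. An electromagnetic field is a 2-form $F$ with $dF=0$; its current density vector is $j^\nu=-\nabla_\mu F^{\mu\nu}$ ($\nabla$ the Levi-Civita connection); force-free means $F(j,\chi)=0$ for all vector fields $\chi$; magnetically dominated means $F_{\mu\nu}F^{\mu\nu}>0$; vacuum means $j=0$. *)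

From Stdlib Require Import Reals Lra.
From Coquelicot Require Import Coquelicot.
Open Scope R_scope.
Open Scope nat_scope.
Open Scope R_scope.

(* Boyer–Lindquist coordinates: a point is x : nat -> R with
   x 0 = t, x 1 = r, x 2 = theta, x 3 = phi (other entries unused).
   Indices of tensors range over 0..3 with the same convention. *)
Definition point := nat -> R.

Definition upd (x : point) (mu : nat) (s : R) : point :=
  fun k => if Nat.eqb k mu then s else x k.

Definition pd (mu : nat) (h : point -> R) (x : point) : R :=
  Derive (fun s => h (upd x mu s)) (x mu).

Definition sum4 (h : nat -> R) : R := h 0%nat + h 1%nat + h 2%nat + h 3%nat.

Section Kerr.
Variables M a : R.

Definition rho2 (x : point) : R := (x 1%nat)^2 + a^2 * (cos (x 2%nat))^2.
Definition Delta (x : point) : R := (x 1%nat)^2 - 2 * M * x 1%nat + a^2.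
Definition Sigma2 (x : point) : R :=
  ((x 1%nat)^2 + a^2)^2 - Delta x * a^2 * (sin (x 2%nat))^2.

Definition g_tt x := -1 + 2 * M * x 1%nat / rho2 x.
Definition g_tp x := - 2 * M * x 1%nat * a * (sin (x 2%nat))^2 / rho2 x.
Definition g_rr x := rho2 x / Delta x.
Definition g_hh x := rho2 x.
Definition g_pp x := Sigma2 x * (sin (x 2%nat))^2 / rho2 x.

Definition metric (mu nu : nat) (x : point) : R :=
  match mu, nu with
  | 0, 0 => g_tt x
  | 0, 3 | 3, 0 => g_tp x
  | 1, 1 => g_rr x
  | 2, 2 => g_hh x
  | 3, 3 => g_pp x
  | _, _ => 0
  end.

(* inverse metric g^{mu nu}: the inverse of the block-diagonal matrix
   above ((t,phi) 2x2 block, r and theta diagonal). *)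
Definition det_tp x := g_tt x * g_pp x - (g_tp x)^2.
Definition ginv (mu nu : nat) (x : point) : R :=
  match mu, nu with
  | 0, 0 => g_pp x / det_tp x
  | 0, 3 | 3, 0 => - g_tp x / det_tp x
  | 1, 1 => / g_rr x
  | 2, 2 => / g_hh x
  | 3, 3 => g_tt x / det_tp x
  | _, _ => 0
  end.

Definition Gamma (l mu nu : nat) (x : point) : R :=
  / 2 * sum4 (fun s => ginv l s x *
     (pd mu (metric s nu) x + pd nu (metric s mu) x - pd s (metric mu nu) x)).

(* A 2-form is given by its antisymmetric components F_{mu nu}. *)
Definition two_form := nat -> nat -> point -> R.

Definition raise (F : two_form) : two_form :=
  fun mu nu x => sum4 (fun al => sum4 (fun be =>
     ginv mu al x * ginv nu be x * F al be x)).

Definition closed_form (F : two_form) (x : point) : Prop :=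
  forall l mu nu, (l < 4)%nat -> (mu < 4)%nat -> (nu < 4)%nat ->
    pd l (F mu nu) x + pd mu (F nu l) x + pd nu (F l mu) x = 0.

Definition div_F (F : two_form) (nu : nat) (x : point) : R :=
  sum4 (fun mu =>
    pd mu (raise F mu nu) x
    + sum4 (fun l => Gamma mu mu l x * raise F l nu x)
    + sum4 (fun l => Gamma nu mu l x * raise F mu l x)).

Definition current (F : two_form) (nu : nat) (x : point) : R := - div_F F nu x.

Definition force_free (F : two_form) (x : point) : Prop :=
  forall chi : nat -> R,
    sum4 (fun mu => sum4 (fun nu => F mu nu x * current F mu x * chi nu)) = 0.

Definition magnetically_dominated (F : two_form) (x : point) : Prop :=
  sum4 (fun mu => sum4 (fun nu => F mu nu x * raise F mu nu x)) > 0.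

Definition vacuum (F : two_form) (x : point) : Prop :=
  forall nu, (nu < 4)%nat -> current F nu x = 0.

(* outer horizon radius and exterior region Delta > 0 (r > r_+), 0<theta<pi *)
Definition r_plus : R := M + sqrt (M^2 - a^2).
Definition exterior (x : point) : Prop :=
  r_plus < x 1%nat /\ 0 < x 2%nat < PI.

End Kerr.

Definition in_kernel (F : two_form) (x : point) (v : nat -> R) : Prop :=
  forall nu, (nu < 4)%nat -> sum4 (fun mu => v mu * F mu nu x) = 0.

Section Field.
Variables M a C u0 : R.
Variable f : R -> R.

Definition SS (x : point) : R := sqrt (C^2 - (f (x 1%nat))^2).

(* F_M = (u0/Delta) dr /\ [ rho^2 sqrt(C^2-f^2)/sin(theta) dtheta
                            + f (a dt - (r^2+a^2) dphi) ],
   with F = 1/2 F_{mu nu} dx^mu /\ dx^nu. *)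
Definition FM : two_form := fun mu nu x =>
  let k := u0 / Delta M a x in
  let r := x 1%nat in
  match mu, nu with
  | 1, 2 => k * (rho2 a x * SS x / sin (x 2%nat))
  | 2, 1 => - (k * (rho2 a x * SS x / sin (x 2%nat)))
  | 1, 0 => k * (f r * a)
  | 0, 1 => - (k * (f r * a))
  | 1, 3 => k * (- (f r * (r^2 + a^2)))
  | 3, 1 => - (k * (- (f r * (r^2 + a^2))))
  | _, _ => 0
  end.

Definition LL (x : point) : R := f (x 1%nat) / SS x.

Definition e0 (x : point) (mu : nat) : R :=
  let n := sqrt (rho2 a x * Delta M a x) in
  match mu with
  | 0 => ((x 1%nat)^2 + a^2) / n
  | 3 => a / n
  | _ => 0
  end.

Definition e1 (x : point) (mu : nat) : R :=
  let d := sqrt (rho2 a x * (1 + (LL x)^2)) * sin (x 2%nat) in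
  match mu with
  | 0 => a * (sin (x 2%nat))^2 / d
  | 2 => LL x * sin (x 2%nat) / d
  | 3 => 1 / d
  | _ => 0
  end.

End Field.

(* The argument is:
   - F_M is closed by a direct component check (its components depend only
     on r and theta, and dr /\ dr = 0);
   - for any antisymmetric field, nabla_mu F^{mu nu} = d_mu F^{mu nu}
     + Gamma^mu_{mu l} F^{l nu}, and by Jacobi's formula Gamma^mu_{mu l} is
     half the log-derivative of |det g| = (rho^2 sin theta)^2;
   - raising the indices of F_M explicitly, this gives the current
     j = u0 f'(r) / (rho^2 sin^2 theta) * (a sin^2 theta, 0, L sin theta, 1),
     a multiple of the kernel vector e1;
   - the kernel of F_M is cut out by dr(v) = 0 and one linear relation, and
     is spanned by e0 and e1, so j lies in the kernel: F_M is force-free,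
     and it is a vacuum solution when f is constant;
   - F_{mu nu} F^{mu nu} = 2 u0^2 C^2 / (Delta sin^2 theta) > 0.
   The file develops coordinate calculus, the Kerr geometry (field_signs on the
   exterior, contracted Christoffel symbols), the divergence of an
   antisymmetric field, then the field F_M, and derives the theorem. *)

From Pilot Require Import Defs.
From Stdlib Require Import Reals Lra Lia FunctionalExtensionality.
From Coquelicot Require Import Coquelicot.
Open Scope R_scope.

Lemma cos2_sin2 (t : R) : cos t ^ 2 = 1 - sin t ^ 2.
Proof. pose proof (sin2_cos2 t) as H; unfold Rsqr in H; nra. Qed.

Lemma upd_same (x : point) (l : nat) : upd x l (x l) = x.
Proof.
apply functional_extensionality; intro k; unfold upd.
destruct (Nat.eqb k l) eqn:E; [apply Nat.eqb_eq in E; subst|]; reflexivity.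
Qed.

Lemma upd_other (x : point) (l k : nat) (s : R) : k <> l -> upd x l s k = x k.
Proof. intro Hkl; unfold upd; now rewrite (proj2 (Nat.eqb_neq k l) Hkl). Qed.

Definition depends_on_r_theta (h : point -> R) : Prop :=
  forall y z : point, y 1%nat = z 1%nat -> y 2%nat = z 2%nat -> h y = h z.

Lemma pd_cyclic (l : nat) (h : point -> R) (x : point) :
  l <> 1%nat -> l <> 2%nat -> depends_on_r_theta h -> pd l h x = 0.
Proof.
intros H1 H2 Hh; unfold pd.
rewrite (Derive_ext _ (fun _ => h x)) by (intro t; apply Hh; apply upd_other; auto).
apply Derive_const.
Qed.

Lemma pd_ext_loc (l : nat) (h g : point -> R) (x : point) :
  locally (x l) (fun s => h (upd x l s) = g (upd x l s)) -> pd l h x = pd l g x.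
Proof. intro H; unfold pd; now apply Derive_ext_loc. Qed.

Lemma Derive_constant_on_ray (g : R -> R) (c r : R) :
  (forall r1 r2, c < r1 -> c < r2 -> g r1 = g r2) -> c < r -> Derive g r = 0.
Proof.
intros Hg Hr; rewrite (Derive_ext_loc g (fun _ => g r)); [apply Derive_const |].
apply (filter_imp (fun s => c < s)); [intros s Hs; now apply Hg | now apply open_gt].
Qed.

(* Jacobi's formula for the determinant of the metric, which is block
   diagonal: the r and theta entries times the (t, phi) 2x2 block. *)
Lemma Derive_block_det (Trr Thh Ttt Tpp Ttp : R -> R) (t : R) :
  ex_derive Trr t -> ex_derive Thh t -> ex_derive Ttt t -> ex_derive Tpp t -> ex_derive Ttp t ->
  Derive (fun s => Trr s * Thh s * (Ttt s * Tpp s - Ttp s ^ 2)) t =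
  Derive Trr t * Thh t * (Ttt t * Tpp t - Ttp t ^ 2)
  + Trr t * Derive Thh t * (Ttt t * Tpp t - Ttp t ^ 2)
  + Trr t * Thh t * (Derive Ttt t * Tpp t + Ttt t * Derive Tpp t - 2 * Ttp t * Derive Ttp t).
Proof.
intros Drr Dhh Dtt Dpp Dtp; apply is_derive_unique.
auto_derive; [repeat split; auto |].
change (fun s => Trr s) with Trr; change (fun s => Thh s) with Thh;
change (fun s => Ttt s) with Ttt; change (fun s => Tpp s) with Tpp;
change (fun s => Ttp s) with Ttp; ring.
Qed.

Section KerrGeometry.
Variables M a : R.
Hypothesis M_pos : 0 < M.
Hypothesis subextremal : a ^ 2 <= M ^ 2.

Lemma exterior_signs (x : point) : exterior M a x ->
  0 < x 1%nat /\ 0 < Defs.Delta M a x /\ 0 < sin (x 2%nat) /\ 0 < rho2 a x.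
Proof.
intros [Hr [Ht1 Ht2]]; unfold r_plus in Hr; unfold Defs.Delta, rho2.
pose proof (sqrt_pos (M ^ 2 - a ^ 2)) as Q0.
pose proof (sqrt_sqrt (M ^ 2 - a ^ 2) ltac:(lra)) as Q1.
pose proof (pow2_ge_0 (a * cos (x 2%nat))).
repeat split; [lra | nra | apply sin_gt_0; lra | nra].
Qed.

Lemma exterior_open (x : point) (l : nat) : exterior M a x -> (l = 1%nat \/ l = 2%nat) ->
  locally (x l) (fun s => exterior M a (upd x l s)).
Proof.
intros [Hr Ht] [-> | ->].
- apply (filter_imp (fun s => r_plus M a < s)); [|now apply open_gt].
  intros s Hs; unfold exterior, upd; cbn [Nat.eqb]; tauto.
- apply (filter_imp (fun s => 0 < s /\ s < PI)).
  + intros s Hs; unfold exterior, upd; cbn [Nat.eqb]; tauto.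
  + apply open_and; [apply open_gt | apply open_lt | tauto].
Qed.

Lemma metric_depends (mu nu : nat) : depends_on_r_theta (metric M a mu nu).
Proof.
intros y z H1 H2; unfold metric, g_tt, g_tp, g_rr, g_hh, g_pp, Sigma2, rho2, Defs.Delta.
now rewrite H1, H2.
Qed.

Lemma ginv_depends (mu nu : nat) : depends_on_r_theta (ginv M a mu nu).
Proof.
intros y z H1 H2; unfold ginv, det_tp, g_tt, g_tp, g_rr, g_hh, g_pp, Sigma2, rho2, Defs.Delta.
now rewrite H1, H2.
Qed.

Lemma Gamma_sym (x : point) (l mu nu : nat) : Gamma M a l mu nu x = Gamma M a l nu mu x.
Proof.
assert (Hsym : metric M a mu nu = metric M a nu mu)
  by (destruct mu as [|[|[|[|mu]]]]; destruct nu as [|[|[|[|nu]]]]; reflexivity).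
unfold Gamma, sum4; rewrite Hsym; ring.
Qed.

Lemma det_tp_eq (y : point) : rho2 a y <> 0 ->
  det_tp M a y = - Defs.Delta M a y * sin (y 2%nat) ^ 2.
Proof.
intro HP; unfold det_tp, g_tt, g_pp, g_tp, Sigma2, Defs.Delta.
unfold rho2 in *; rewrite cos2_sin2 in *; field; auto.
Qed.

Definition metric_det (y : point) : R := g_rr M a y * g_hh a y * det_tp M a y.

Lemma metric_det_eq (y : point) : exterior M a y ->
  metric_det y = - rho2 a y ^ 2 * sin (y 2%nat) ^ 2.
Proof.
intro Hy; destruct (exterior_signs y Hy) as (Hr & HD & Hs & HP).
unfold metric_det; rewrite det_tp_eq by lra; unfold g_rr, g_hh; field; lra.
Qed.

Definition Gamma_trace (l : nat) (x : point) : R := sum4 (fun mu => Gamma M a mu mu l x).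

(* Gamma^mu_{mu l} = (1/2) tr(g^{-1} d_l g) for the block-diagonal metric. *)
Lemma Gamma_trace_expand (x : point) (l : nat) : Gamma_trace l x =
  / 2 * (g_pp M a x / det_tp M a x * pd l (g_tt M a) x
        + 2 * (- g_tp M a x / det_tp M a x) * pd l (g_tp M a) x
        + g_tt M a x / det_tp M a x * pd l (g_pp M a) x
        + / g_rr M a x * pd l (g_rr M a) x
        + / g_hh a x * pd l (g_hh a) x).
Proof.
cbv [Gamma_trace Gamma sum4 ginv metric].
change (fun y => g_tt M a y) with (g_tt M a); change (fun y => g_tp M a y) with (g_tp M a);
change (fun y => g_pp M a y) with (g_pp M a); change (fun y => g_rr M a y) with (g_rr M a);
change (fun y => g_hh a y) with (g_hh a); ring.
Qed.

Lemma metric_derivable (x : point) (l : nat) : exterior M a x -> (l = 1%nat \/ l = 2%nat) ->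
  ex_derive (fun s => g_tt M a (upd x l s)) (x l) /\
  ex_derive (fun s => g_tp M a (upd x l s)) (x l) /\
  ex_derive (fun s => g_pp M a (upd x l s)) (x l) /\
  ex_derive (fun s => g_rr M a (upd x l s)) (x l) /\
  ex_derive (fun s => g_hh a (upd x l s)) (x l).
Proof.
intros Hx Hl; destruct (exterior_signs x Hx) as (Hr & HD & Hs & HP).
unfold Defs.Delta, rho2 in *.
destruct Hl as [-> | ->]; repeat split;
  unfold g_tt, g_tp, g_pp, g_rr, g_hh, Sigma2, rho2, Defs.Delta, upd; cbn [Nat.eqb];
  auto_derive; repeat split; lra.
Qed.

Lemma Gamma_trace_log_det (x : point) (l : nat) : exterior M a x -> (l = 1%nat \/ l = 2%nat) ->
  Gamma_trace l x = / 2 * pd l metric_det x / metric_det x.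
Proof.
intros Hx Hl.
destruct (metric_derivable x l Hx Hl) as (Dtt & Dtp & Dpp & Drr & Dhh).
destruct (exterior_signs x Hx) as (Hr & HD & Hs & HP).
assert (Nrr : g_rr M a x <> 0) by (unfold g_rr; apply Rgt_not_eq, Rdiv_lt_0_compat; lra).
assert (Nhh : g_hh a x <> 0) by (unfold g_hh; lra).
assert (Ndet : det_tp M a x <> 0)
  by (rewrite det_tp_eq by lra; apply Rlt_not_eq; pose proof (pow_lt _ 2 Hs); nra).
rewrite Gamma_trace_expand; unfold metric_det, pd, det_tp in *.
rewrite (Derive_block_det (fun s => g_rr M a (upd x l s)) (fun s => g_hh a (upd x l s))
  (fun s => g_tt M a (upd x l s)) (fun s => g_pp M a (upd x l s))
  (fun s => g_tp M a (upd x l s))) by auto.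
rewrite !upd_same; field; auto.
Qed.

(* The log-derivative of |det g| = (rho^2 sin theta)^2 in r and in theta. *)
Lemma Gamma_trace_r (x : point) : exterior M a x ->
  Gamma_trace 1 x = 2 * x 1%nat / rho2 a x.
Proof.
intro Hx; destruct (exterior_signs x Hx) as (Hr & HD & Hs & HP).
rewrite Gamma_trace_log_det, metric_det_eq by auto.
rewrite (pd_ext_loc 1 metric_det (fun y => - rho2 a y ^ 2 * sin (y 2%nat) ^ 2))
  by (apply (filter_imp _ _ (fun s => metric_det_eq (upd x 1 s))), exterior_open; auto).
replace (pd 1 _ x) with (- (2 * rho2 a x * (2 * x 1%nat)) * sin (x 2%nat) ^ 2).
- unfold rho2 in *; field; lra.
- symmetry; apply is_derive_unique; unfold rho2, upd; cbn [Nat.eqb]; auto_derive; auto; ring.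
Qed.

Lemma Gamma_trace_theta (x : point) : exterior M a x ->
  Gamma_trace 2 x =
  (- (2 * a ^ 2 * cos (x 2%nat) * sin (x 2%nat)) * sin (x 2%nat) + rho2 a x * cos (x 2%nat))
  / (rho2 a x * sin (x 2%nat)).
Proof.
intro Hx; destruct (exterior_signs x Hx) as (Hr & HD & Hs & HP).
rewrite Gamma_trace_log_det, metric_det_eq by auto.
rewrite (pd_ext_loc 2 metric_det (fun y => - rho2 a y ^ 2 * sin (y 2%nat) ^ 2))
  by (apply (filter_imp _ _ (fun s => metric_det_eq (upd x 2 s))), exterior_open; auto).
replace (pd 2 _ x) with
  (- (2 * rho2 a x * (- (2 * a ^ 2 * cos (x 2%nat) * sin (x 2%nat)))) * sin (x 2%nat) ^ 2
   - rho2 a x ^ 2 * (2 * sin (x 2%nat) * cos (x 2%nat))).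
- unfold rho2 in *; field; lra.
- symmetry; apply is_derive_unique; unfold rho2, upd; cbn [Nat.eqb]; auto_derive; auto; ring.
Qed.

(* The metric is stationary and axisymmetric. *)
Lemma Gamma_trace_cyclic (x : point) (l : nat) : l <> 1%nat -> l <> 2%nat -> Gamma_trace l x = 0.
Proof.
intros H1 H2; rewrite Gamma_trace_expand.
rewrite !(pd_cyclic l) by (auto; first [exact (metric_depends 0 0) | exact (metric_depends 0 3)
  | exact (metric_depends 3 3) | exact (metric_depends 1 1) | exact (metric_depends 2 2)]).
ring.
Qed.

End KerrGeometry.

Definition antisymmetric (A : nat -> nat -> R) : Prop := forall i j, A i j = - A j i.

Lemma antisymmetric_diag (A : nat -> nat -> R) (i : nat) : antisymmetric A -> A i i = 0.
Proof. intro HA; pose proof (HA i i); lra. Qed.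

Lemma sum4_sym_antisym (S A : nat -> nat -> R) :
  (forall i j, S i j = S j i) -> antisymmetric A ->
  sum4 (fun i => sum4 (fun j => S i j * A i j)) = 0.
Proof.
intros HS HA; unfold sum4; rewrite !(antisymmetric_diag A) by exact HA.
rewrite (HS 1%nat 0%nat), (HS 2%nat 0%nat), (HS 2%nat 1%nat), (HS 3%nat 0%nat),
  (HS 3%nat 1%nat), (HS 3%nat 2%nat), (HA 1%nat 0%nat), (HA 2%nat 0%nat), (HA 2%nat 1%nat),
  (HA 3%nat 0%nat), (HA 3%nat 1%nat), (HA 3%nat 2%nat).
ring.
Qed.

Lemma in_kernel_scale (F : two_form) (x : point) (v : nat -> R) (c : R) :
  in_kernel F x v -> in_kernel F x (fun mu => c * v mu).
Proof.
intros Hv nu Hnu; specialize (Hv nu Hnu); unfold sum4 in *.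
rewrite <- (Rmult_0_r c), <- Hv; ring.
Qed.

Lemma in_kernel_lincomb (F : two_form) (x : point) (v w : nat -> R) (c d : R) :
  in_kernel F x v -> in_kernel F x w -> in_kernel F x (fun mu => c * v mu + d * w mu).
Proof.
intros Hv Hw nu Hnu; pose proof (in_kernel_scale F x v c Hv nu Hnu) as Ev;
pose proof (in_kernel_scale F x w d Hw nu Hnu) as Ew; unfold sum4 in *; lra.
Qed.

Lemma in_kernel_ext (F : two_form) (x : point) (v w : nat -> R) :
  (forall mu, (mu < 4)%nat -> w mu = v mu) -> in_kernel F x v -> in_kernel F x w.
Proof. intros Hwv Hv nu Hnu; unfold sum4; rewrite !Hwv by lia; apply Hv, Hnu. Qed.

Lemma force_free_of_kernel (M a : R) (F : two_form) (x : point) :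
  in_kernel F x (fun mu => current M a F mu x) -> force_free M a F x.
Proof.
intros Hj chi; unfold sum4.
transitivity (sum4 (fun nu => chi nu * sum4 (fun mu => current M a F mu x * F mu nu x)));
  [unfold sum4; ring |].
unfold sum4 at 1; rewrite !Hj by lia; ring.
Qed.

Section Divergence.
Variables M a : R.

Lemma raise_antisym (F : two_form) (x : point) :
  antisymmetric (fun i j => F i j x) -> antisymmetric (fun i j => raise M a F i j x).
Proof.
intros HA mu nu; unfold raise, sum4.
rewrite !(antisymmetric_diag (fun i j => F i j x)) by exact HA.
rewrite (HA 1%nat 0%nat), (HA 2%nat 0%nat), (HA 2%nat 1%nat),
  (HA 3%nat 0%nat), (HA 3%nat 1%nat), (HA 3%nat 2%nat).
ring.
Qed.

Lemma div_F_antisym (F : two_form) (nu : nat) (x : point) :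
  antisymmetric (fun i j => F i j x) ->
  div_F M a F nu x = sum4 (fun mu => pd mu (raise M a F mu nu) x)
                     + sum4 (fun l => Gamma_trace M a l x * raise M a F l nu x).
Proof.
intro HA.
assert (Hzero : sum4 (fun mu => sum4 (fun l => Gamma M a nu mu l x * raise M a F mu l x)) = 0)
  by (apply sum4_sym_antisym; [apply Gamma_sym | now apply raise_antisym]).
rewrite <- (Rplus_0_r (_ + sum4 _)), <- Hzero.
unfold div_F, Gamma_trace, sum4; ring.
Qed.

End Divergence.

Section ForceFreeField.
Variables M a C u0 : R.
Variable f : R -> R.
Hypothesis M_pos : 0 < M.
Hypothesis subextremal : a ^ 2 <= M ^ 2.
Hypothesis f_derivable : forall r : R, r_plus M a < r -> ex_derive f r.
Hypothesis f_bound : forall r : R, r_plus M a < r -> f r ^ 2 < C ^ 2.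

Let F := FM M a C u0 f.

Lemma field_signs (x : point) : exterior M a x ->
  0 < x 1%nat /\ 0 < Defs.Delta M a x /\ 0 < sin (x 2%nat) /\ 0 < rho2 a x
  /\ 0 < SS C f x /\ SS C f x ^ 2 = C ^ 2 - f (x 1%nat) ^ 2.
Proof.
intro Hx; destruct (exterior_signs M a M_pos subextremal x Hx) as (Hr & HD & Hs & HP).
pose proof (f_bound (x 1%nat) (proj1 Hx)) as Hb.
repeat split; auto; unfold SS; [apply sqrt_lt_R0; lra |].
rewrite <- Rsqr_pow2; apply Rsqr_sqrt; lra.
Qed.

Lemma FM_antisym (x : point) : antisymmetric (fun i j => F i j x).
Proof.
intros i j; unfold F.
destruct i as [|[|[|[|i]]]]; destruct j as [|[|[|[|j]]]]; cbn [FM]; ring.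
Qed.

Lemma FM_depends (mu nu : nat) : depends_on_r_theta (F mu nu).
Proof. intros y z H1 H2; unfold F, FM, SS, rho2, Defs.Delta; now rewrite H1, H2. Qed.

Lemma raise_FM_depends (mu nu : nat) : depends_on_r_theta (raise M a F mu nu).
Proof.
intros y z H1 H2; unfold raise, sum4.
rewrite !(ginv_depends M a _ _ y z H1 H2), !(FM_depends _ _ y z H1 H2); reflexivity.
Qed.

Definition FM_up (mu nu : nat) (y : point) : R :=
  let P := rho2 a y in let s := sin (y 2%nat) in let fr := f (y 1%nat) in
  match mu, nu with
  | 1, 0 => - (u0 * fr * a / P)
  | 0, 1 => u0 * fr * a / P
  | 1, 2 => u0 * SS C f y / (P * s)
  | 2, 1 => - (u0 * SS C f y / (P * s))
  | 1, 3 => - (u0 * fr / (P * s ^ 2))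
  | 3, 1 => u0 * fr / (P * s ^ 2)
  | _, _ => 0
  end.

Lemma raise_FM (y : point) (mu nu : nat) : exterior M a y -> (mu < 4)%nat -> (nu < 4)%nat ->
  raise M a F mu nu y = FM_up mu nu y.
Proof.
intros Hy Hmu Hnu; destruct (field_signs y Hy) as (Hr & HD & Hs & HP & _).
unfold Defs.Delta, rho2 in *; rewrite cos2_sin2 in HP.
destruct mu as [|[|[|[|mu]]]]; try lia; destruct nu as [|[|[|[|nu]]]]; try lia;
cbv [raise sum4 ginv F FM FM_up]; rewrite ?det_tp_eq by (unfold rho2; rewrite cos2_sin2; lra);
unfold g_tt, g_pp, g_tp, g_rr, g_hh, Sigma2, rho2, Defs.Delta; rewrite ?cos2_sin2;
field; repeat split; lra.
Qed.

Lemma div_FM (x : point) (nu : nat) : exterior M a x -> (nu < 4)%nat ->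
  div_F M a F nu x =
  pd 1 (FM_up 1 nu) x + pd 2 (FM_up 2 nu) x
  + 2 * x 1%nat / rho2 a x * FM_up 1 nu x
  + (- (2 * a ^ 2 * cos (x 2%nat) * sin (x 2%nat)) * sin (x 2%nat) + rho2 a x * cos (x 2%nat))
    / (rho2 a x * sin (x 2%nat)) * FM_up 2 nu x.
Proof.
intros Hx Hnu.
assert (Hpd : forall l, (l = 1%nat \/ l = 2%nat) -> pd l (raise M a F l nu) x = pd l (FM_up l nu) x).
{ intros l Hl; apply pd_ext_loc.
  apply (filter_imp (fun s => exterior M a (upd x l s))); [|now apply exterior_open].
  intros s Hs; apply raise_FM; auto; destruct Hl as [-> | ->]; lia. }
rewrite div_F_antisym by apply FM_antisym; unfold sum4.
rewrite (pd_cyclic 0), (pd_cyclic 3), Hpd, Hpd by (auto using raise_FM_depends).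
rewrite (Gamma_trace_cyclic M a x 0), (Gamma_trace_cyclic M a x 3), Gamma_trace_r,
  Gamma_trace_theta by auto.
rewrite !raise_FM by (auto; lia); ring.
Qed.

(* Side conditions of auto_derive: derivability of f, positivity of
   C^2 - f^2 under a square root, and non-vanishing of products of the
   positive quantities r, rho^2, sin theta. *)
Ltac nonzero_side_conditions :=
  repeat split; auto; try lra;
  apply Rgt_not_eq; repeat apply Rmult_lt_0_compat; try apply sqrt_lt_R0; nra.

Lemma pd_FM_up_10 (x : point) : exterior M a x ->
  pd 1 (FM_up 1 0) x =
  - (u0 * a * (Derive f (x 1%nat) * rho2 a x - f (x 1%nat) * (2 * x 1%nat)) / rho2 a x ^ 2).
Proof.
intro Hx; destruct (field_signs x Hx) as (Hr & HD & Hs & HP & _).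
pose proof (f_derivable _ (proj1 Hx)).
unfold pd; rewrite (Derive_ext _ (fun t =>
  - (u0 * f t * a / (t ^ 2 + a ^ 2 * cos (x 2%nat) ^ 2)))) by reflexivity.
apply is_derive_unique; unfold rho2 in *.
auto_derive; [nonzero_side_conditions |].
change (Derive (fun s => f s)) with (Derive f); field; lra.
Qed.

Lemma pd_FM_up_13 (x : point) : exterior M a x ->
  pd 1 (FM_up 1 3) x =
  - (u0 * (Derive f (x 1%nat) * rho2 a x - f (x 1%nat) * (2 * x 1%nat))
     / (rho2 a x ^ 2 * sin (x 2%nat) ^ 2)).
Proof.
intro Hx; destruct (field_signs x Hx) as (Hr & HD & Hs & HP & _).
pose proof (f_derivable _ (proj1 Hx)).
unfold pd; rewrite (Derive_ext _ (fun t =>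
  - (u0 * f t / ((t ^ 2 + a ^ 2 * cos (x 2%nat) ^ 2) * sin (x 2%nat) ^ 2)))) by reflexivity.
apply is_derive_unique; unfold rho2 in *.
auto_derive; [nonzero_side_conditions |].
change (Derive (fun s => f s)) with (Derive f); field; lra.
Qed.

Lemma pd_FM_up_12 (x : point) : exterior M a x ->
  pd 1 (FM_up 1 2) x =
  u0 * (- (f (x 1%nat) * Derive f (x 1%nat)) / SS C f x * rho2 a x - SS C f x * (2 * x 1%nat))
  / (rho2 a x ^ 2 * sin (x 2%nat)).
Proof.
intro Hx; destruct (field_signs x Hx) as (Hr & HD & Hs & HP & HS & _).
pose proof (f_derivable _ (proj1 Hx)); pose proof (f_bound _ (proj1 Hx)).
unfold pd; rewrite (Derive_ext _ (fun t =>
  u0 * sqrt (C ^ 2 - f t ^ 2) / ((t ^ 2 + a ^ 2 * cos (x 2%nat) ^ 2) * sin (x 2%nat))))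
  by reflexivity.
apply is_derive_unique; unfold SS, rho2 in *.
auto_derive; [nonzero_side_conditions |].
replace (C * (C * 1) + - (f (x 1%nat) * (f (x 1%nat) * 1))) with (C ^ 2 - f (x 1%nat) ^ 2)
  by ring.
change (Derive (fun s => f s)) with (Derive f); field; lra.
Qed.

Lemma pd_FM_up_21 (x : point) : exterior M a x ->
  pd 2 (FM_up 2 1) x =
  u0 * SS C f x * (- (2 * a ^ 2 * cos (x 2%nat) * sin (x 2%nat)) * sin (x 2%nat)
                   + rho2 a x * cos (x 2%nat)) / (rho2 a x * sin (x 2%nat)) ^ 2.
Proof.
intro Hx; destruct (field_signs x Hx) as (Hr & HD & Hs & HP & _).
unfold pd; rewrite (Derive_ext _ (fun t =>
  - (u0 * SS C f x / ((x 1%nat ^ 2 + a ^ 2 * cos t ^ 2) * sin t)))) by reflexivity.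
apply is_derive_unique; unfold rho2 in *.
auto_derive; [nonzero_side_conditions |].
field; lra.
Qed.

Definition e1_dir (x : point) (mu : nat) : R :=
  match mu with
  | 0 => a * sin (x 2%nat) ^ 2
  | 2 => LL C f x * sin (x 2%nat)
  | 3 => 1
  | _ => 0
  end.

Lemma current_FM (x : point) (nu : nat) : exterior M a x -> (nu < 4)%nat ->
  current M a F nu x = u0 * Derive f (x 1%nat) / (rho2 a x * sin (x 2%nat) ^ 2) * e1_dir x nu.
Proof.
intros Hx Hnu; destruct (field_signs x Hx) as (Hr & HD & Hs & HP & HS & _).
unfold current; rewrite div_FM by auto.
destruct nu as [|[|[|[|nu]]]]; try lia;
  rewrite ?pd_FM_up_10, ?pd_FM_up_12, ?pd_FM_up_13, ?pd_FM_up_21 by auto;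
  unfold pd; cbn [FM_up e1_dir]; rewrite ?Derive_const; unfold LL, rho2 in *; field; lra.
Qed.

Definition kernel_relation (x : point) (v : nat -> R) : R :=
  f (x 1%nat) * a * v 0%nat + rho2 a x * SS C f x / sin (x 2%nat) * v 2%nat
  - f (x 1%nat) * (x 1%nat ^ 2 + a ^ 2) * v 3%nat.

Lemma in_kernel_FM_iff (x : point) (v : nat -> R) : exterior M a x -> u0 <> 0 ->
  (in_kernel F x v <-> v 1%nat = 0 /\ kernel_relation x v = 0).
Proof.
intros Hx Hu; destruct (field_signs x Hx) as (Hr & HD & Hs & HP & HS & _).
set (k := u0 / Defs.Delta M a x).
assert (Hk : k <> 0)
  by (apply Rmult_integral_contrapositive; split; [|apply Rinv_neq_0_compat]; lra).
assert (Hq : rho2 a x * SS C f x / sin (x 2%nat) <> 0)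
  by (apply Rgt_not_eq, Rdiv_lt_0_compat; [apply Rmult_lt_0_compat|]; lra).
split.
- intro Hv; pose proof (Hv 1%nat ltac:(lia)) as E1; pose proof (Hv 2%nat ltac:(lia)) as E2.
  unfold sum4, F in E1, E2; cbn [FM] in E1, E2; fold k in E1, E2.
  assert (V1 : v 1%nat = 0).
  { apply (Rmult_eq_reg_r (k * (rho2 a x * SS C f x / sin (x 2%nat))));
      [lra | now apply Rmult_integral_contrapositive]. }
  split; [exact V1 |].
  apply (Rmult_eq_reg_l (- k)); [| lra].
  rewrite Rmult_0_r, <- E1; unfold kernel_relation; ring.
- intros [V1 E] nu Hnu; unfold sum4, F; rewrite V1.
  destruct nu as [|[|[|[|nu]]]]; try lia; cbn [FM]; fold k; try ring.
  transitivity (- k * kernel_relation x v); [unfold kernel_relation; ring | rewrite E; ring].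
Qed.

(* The direction of e1 satisfies the kernel relation since rho^2 = r^2 + a^2 - a^2 sin^2 theta. *)
Lemma e1_dir_in_kernel (x : point) : exterior M a x -> u0 <> 0 -> in_kernel F x (e1_dir x).
Proof.
intros Hx Hu; destruct (field_signs x Hx) as (Hr & HD & Hs & HP & HS & _).
apply in_kernel_FM_iff; auto; split; [reflexivity |].
unfold kernel_relation; cbn [e1_dir]; unfold LL, rho2 in *; rewrite cos2_sin2; field; lra.
Qed.

(* The current is a multiple of e1, hence in the kernel: F_M is force-free. *)
Lemma FM_force_free (x : point) : exterior M a x -> u0 <> 0 -> force_free M a F x.
Proof.
intros Hx Hu; apply force_free_of_kernel.
apply (in_kernel_ext _ _ (fun mu => u0 * Derive f (x 1%nat) / (rho2 a x * sin (x 2%nat) ^ 2)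
                                     * e1_dir x mu)).
- intros mu Hmu; now apply current_FM.
- now apply in_kernel_scale, e1_dir_in_kernel.
Qed.

Lemma e0_in_kernel (x : point) : exterior M a x -> u0 <> 0 -> in_kernel F x (e0 M a x).
Proof.
intros Hx Hu; apply in_kernel_FM_iff; auto; split; [reflexivity |].
unfold kernel_relation; cbn [e0]; unfold Rdiv; ring.
Qed.

Lemma e1_in_kernel (x : point) : exterior M a x -> u0 <> 0 -> in_kernel F x (e1 a C f x).
Proof.
intros Hx Hu.
apply (in_kernel_ext _ _ (fun mu => / (sqrt (rho2 a x * (1 + LL C f x ^ 2)) * sin (x 2%nat))
                                    * e1_dir x mu)).
- intros mu Hmu; destruct mu as [|[|[|[|mu]]]]; try lia; cbn [e1 e1_dir]; unfold Rdiv; ring.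
- now apply in_kernel_scale, e1_dir_in_kernel.
Qed.

Lemma kernel_FM_span (x : point) (v : nat -> R) : exterior M a x -> u0 <> 0 ->
  (in_kernel F x v <->
   exists al be : R, forall mu : nat, (mu < 4)%nat -> v mu = al * e0 M a x mu + be * e1 a C f x mu).
Proof.
intros Hx Hu; split.
- intro Hv; apply in_kernel_FM_iff in Hv as [V1 E]; auto; unfold kernel_relation in E.
  destruct (field_signs x Hx) as (Hr & HD & Hs & HP & HS & _).
  set (s := sin (x 2%nat)) in *.
  set (n0 := sqrt (rho2 a x * Defs.Delta M a x)).
  set (d := sqrt (rho2 a x * (1 + LL C f x ^ 2)) * s).
  assert (Hn0 : 0 < n0) by (apply sqrt_lt_R0, Rmult_lt_0_compat; lra).
  assert (Hd : 0 < d).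
  { apply Rmult_lt_0_compat; auto; apply sqrt_lt_R0, Rmult_lt_0_compat; [lra|].
    pose proof (pow2_ge_0 (LL C f x)); lra. }
  assert (V2 : v 2%nat = LL C f x * s * ((x 1%nat ^ 2 + a ^ 2) * v 3%nat - a * v 0%nat) / rho2 a x).
  { apply (Rmult_eq_reg_l (rho2 a x * SS C f x / s)).
    - replace (rho2 a x * SS C f x / s * v 2%nat)
        with (f (x 1%nat) * (x 1%nat ^ 2 + a ^ 2) * v 3%nat - f (x 1%nat) * a * v 0%nat)
        by (apply Rminus_diag_uniq_sym; rewrite <- E; unfold Rdiv; ring).
      unfold LL; field; lra.
    - apply Rgt_not_eq, Rdiv_lt_0_compat; [apply Rmult_lt_0_compat|]; lra. }
  assert (Hcos : cos (x 2%nat) ^ 2 = 1 - s ^ 2) by apply cos2_sin2.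
  exists ((v 0%nat - a * s ^ 2 * v 3%nat) / rho2 a x * n0).
  exists (((x 1%nat ^ 2 + a ^ 2) * v 3%nat - a * v 0%nat) / rho2 a x * d).
  intros mu Hmu; destruct mu as [|[|[|[|mu]]]]; try lia; cbn [e0 e1]; fold s n0 d;
    rewrite ?V1, ?V2; unfold rho2 in *; rewrite ?Hcos in *; field; lra.
- intros (al & be & Hv).
  apply (in_kernel_ext _ _ _ _ Hv), in_kernel_lincomb; auto using e0_in_kernel, e1_in_kernel.
Qed.

Lemma FM_invariant (x : point) : exterior M a x ->
  sum4 (fun mu => sum4 (fun nu => F mu nu x * raise M a F mu nu x))
  = 2 * u0 ^ 2 * C ^ 2 / (Defs.Delta M a x * sin (x 2%nat) ^ 2).
Proof.
intro Hx; destruct (field_signs x Hx) as (Hr & HD & Hs & HP & HS & HS2).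
unfold sum4; rewrite !raise_FM by (auto; lia); unfold F; cbn [FM FM_up].
transitivity (2 * u0 ^ 2 * (SS C f x ^ 2 + f (x 1%nat) ^ 2) / (Defs.Delta M a x * sin (x 2%nat) ^ 2)).
- unfold Defs.Delta, rho2 in *; rewrite cos2_sin2 in *; field; lra.
- rewrite HS2; field; lra.
Qed.

Lemma FM_magnetically_dominated (x : point) : exterior M a x -> C <> 0 -> u0 <> 0 ->
  magnetically_dominated M a F x.
Proof.
intros Hx HC Hu; destruct (field_signs x Hx) as (Hr & HD & Hs & HP & _).
unfold magnetically_dominated; rewrite FM_invariant by auto.
pose proof (pow2_gt_0 u0 Hu); pose proof (pow2_gt_0 C HC); pose proof (pow_lt _ 2 Hs).
apply Rdiv_lt_0_compat; nra.
Qed.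

Lemma FM_vacuum (x : point) : exterior M a x -> Derive f (x 1%nat) = 0 -> vacuum M a F x.
Proof.
intros Hx Hf nu Hnu; rewrite current_FM, Hf by auto; unfold Rdiv; ring.
Qed.

End ForceFreeField.

(* F_M is closed: a finite check on the components, each cyclic sum
   cancelling by antisymmetry or because the component is independent of
   the coordinate being differentiated. *)
Lemma FM_closed (M a C u0 : R) (f : R -> R) (x : point) : closed_form (FM M a C u0 f) x.
Proof.
intros l mu nu Hl Hmu Hnu.
destruct l as [|[|[|[|l]]]]; try lia; destruct mu as [|[|[|[|mu]]]]; try lia;
destruct nu as [|[|[|[|nu]]]]; try lia;
unfold pd; cbn [FM]; unfold Defs.Delta, rho2, SS, upd; cbn [Nat.eqb];
rewrite ?Derive_const, ?Derive_opp; ring.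
Qed.

Theorem mainTheorem12 (M a C u0 : R) (f : R -> R) :
  0 < M -> a ^ 2 <= M ^ 2 ->
  C <> 0 -> u0 <> 0 ->
  (forall (n : nat) (r : R), r_plus M a < r -> ex_derive_n f n r) ->
  (forall r : R, r_plus M a < r -> (f r) ^ 2 < C ^ 2) ->
  (forall x : point, exterior M a x ->
     closed_form (FM M a C u0 f) x
     /\ force_free M a (FM M a C u0 f) x
     /\ magnetically_dominated M a (FM M a C u0 f) x
     /\ (forall v : nat -> R,
           in_kernel (FM M a C u0 f) x v <->
           exists al be : R, forall mu : nat, (mu < 4)%nat ->
             v mu = al * e0 M a x mu + be * e1 a C f x mu))
  /\ ((forall r1 r2 : R, r_plus M a < r1 -> r_plus M a < r2 -> f r1 = f r2) ->
      forall x : point, exterior M a x -> vacuum M a (FM M a C u0 f) x).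
Proof.
intros HM Ha HC Hu Hsmooth Hbound.
assert (Hderiv : forall r, r_plus M a < r -> ex_derive f r) by exact (Hsmooth 1%nat).
split.
- intros x Hx.
  split; [apply FM_closed |].
  split; [now apply FM_force_free |].
  split; [now apply FM_magnetically_dominated |].
  intro v; now apply kernel_FM_span.
- intros Hconst x Hx; apply FM_vacuum; auto.
  exact (Derive_constant_on_ray f _ _ Hconst (proj1 Hx)).
Qed.
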